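(* For all integers $n\ge0$, $$r_{2n}(s,q)=\sum_{k=0}^n(-q;q)_k\,q^{\binom{k}{2}}s^k\begin{bmatrix} n\\ k\end{bmatrix}_{q^2}r_{n-k}(s^2,q^2),$$ $$r_{2n+1}(s,q)=(1+s)\sum_{k=0}^n(-q;q)_k\,q^{\binom{k+1}{2}}s^k\begin{bmatrix} n\\ k\end{bmatrix}_{q^2}r_{n-k}(s^2,q^2).$$
   Context: $q$ is an indeterminate. $(x;q)_n=\prod_{j=0}^{n-1}(1-q^jx)$. The Gaussian binomial coefficient is $\begin{bmatrix} n\\ j\end{bmatrix}_q=\frac{(q;q)_n}{(q;q)_j(q;q)_{n-j}}$ for $0\le j\le n$ and $0$ otherwise. The Rogers–Szegö polynomials are $r_n(s,q)=\sum_{j=0}^n\begin{bmatrix} n\\ j\end{bmatrix}_q s^j$. *)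

From HB Require Import structures.
From mathcomp Require Import all_boot all_order all_algebra.
Set Implicit Arguments. Unset Strict Implicit. Unset Printing Implicit Defensive.
Import Order.TTheory GRing.Theory Num.Theory.
Local Open Scope ring_scope.

Definition K : fieldType := {fraction {poly rat}}.
Definition qK : K := tofrac ('X : {poly rat}).

Definition qpoch (x b : K) (n : nat) : K := \prod_(j < n) (1 - b ^+ j * x).

Definition gauss (b : K) (n j : nat) : K :=
  if (j <= n)%N then qpoch b b n / (qpoch b b j * qpoch b b (n - j)) else 0.

Definition RS (s b : K) (n : nat) : K := \sum_(j < n.+1) gauss b n j * s ^+ j.

(* Write F_n(u, t) for the right-hand side with u and t in place of s and s^2,
   so that the claims read r_{2n}(s) = F_n(s, s^2) and
   r_{2n+1}(s) = (1 + s) F_n(qs, s^2).  From the relations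
   r_{m+1}(t) = r_m(q^2 t) + t r_m(t) and r_m(t) - r_m(q^2 t) = (1 - q^{2m}) t r_{m-1}(t)
   of the base-q^2 polynomials, F_n inherits a Pascal-type recurrence in n and
   the two q-difference equations
     F_n(u, t) - F_n(u, q^2 t) = (1 - q^{2n}) t F_{n-1}(u, t),
     F_n(u, t) - F_n(qu, t)    = (1 - q^{2n}) u F_{n-1}(qu, t).
   Splitting r_{m+1}(s) = r_m(qs) + s r_m(s) once, the odd identity for n follows
   from the even one, and the even identity for n + 1 from the odd one: in both
   steps the discrepancy is a combination of the two difference equations that
   cancels. *)

From HB Require Import structures.
From mathcomp Require Import all_boot all_order all_algebra.
From mathcomp Require Import ring.
Set Implicit Arguments.
Unset Strict Implicit.
Unset Printing Implicit Defensive.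
Import GRing.Theory Num.Theory.
Local Open Scope ring_scope.

Lemma qpoch0 x c : qpoch x c 0 = 1.
Proof. by rewrite /qpoch big_ord0. Qed.

Lemma qpochS x c n : qpoch x c n.+1 = qpoch x c n * (1 - c ^+ n * x).
Proof. by rewrite /qpoch big_ord_recr. Qed.

(* Otherwise [ring] unfolds the product when reifying goals built by generic
   field lemmas such as [eqr_div], and does not terminate. *)
Opaque qpoch.

Section GaussBinomial.

Variable b : K.
Hypothesis b_not_root1 : forall m, (0 < m)%N -> b ^+ m != 1.

Lemma subr1X_neq0 m : (0 < m)%N -> 1 - b ^+ m != 0.
Proof. by move=> m_gt0; rewrite subr_eq0 eq_sym b_not_root1. Qed.

Lemma qpoch_baseS n : qpoch b b n.+1 = qpoch b b n * (1 - b ^+ n.+1).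
Proof. by rewrite qpochS exprSr. Qed.

Lemma qpoch_base_neq0 n : qpoch b b n != 0.
Proof.
elim: n => [|n IHn]; first by rewrite qpoch0 oner_neq0.
by rewrite qpoch_baseS mulf_neq0 ?subr1X_neq0.
Qed.

Lemma gaussE n k :
  (k <= n)%N -> gauss b n k = qpoch b b n / (qpoch b b k * qpoch b b (n - k)).
Proof. by rewrite /gauss => ->. Qed.

Lemma gauss_small n k : (n < k)%N -> gauss b n k = 0.
Proof. by rewrite /gauss ltnNge => /negbTE ->. Qed.

Lemma gauss0 n : gauss b n 0 = 1.
Proof. by rewrite gaussE // subn0 qpoch0 mul1r divff ?qpoch_base_neq0. Qed.

Lemma mul_gauss_diag n k :
  (1 - b ^+ k.+1) * gauss b n.+1 k.+1 = (1 - b ^+ n.+1) * gauss b n k.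
Proof.
have [le_kn | lt_nk] := leqP k n; last by rewrite !gauss_small ?mulr0.
rewrite !gaussE // subSS !qpoch_baseS !mulrA.
apply/eqP; rewrite eqr_div ?mulf_neq0 ?qpoch_base_neq0 ?subr1X_neq0 //.
by apply/eqP; ring.
Qed.

Lemma mul_gauss_down n k :
  (1 - b ^+ (n.+1 - k)) * gauss b n.+1 k = (1 - b ^+ n.+1) * gauss b n k.
Proof.
have [le_kn | lt_nk] := leqP k n.
  rewrite !gaussE ?(leqW le_kn) // subSn // !qpoch_baseS !mulrA.
  apply/eqP; rewrite eqr_div ?mulf_neq0 ?qpoch_base_neq0 ?subr1X_neq0 //.
by apply/eqP; ring.
rewrite [gauss b n k]gauss_small // mulr0.
have [-> | ne_kn1] := eqVneq k n.+1; first by rewrite subnn expr0 subrr mul0r.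
by rewrite gauss_small ?mulr0 // ltn_neqAle eq_sym ne_kn1.
Qed.

Lemma mul_gauss_left n k :
  (1 - b ^+ k.+1) * gauss b n k.+1 = (1 - b ^+ (n - k)) * gauss b n k.
Proof.
have [lt_kn | le_nk] := ltnP k n; last first.
  by rewrite gauss_small ?ltnS // mulr0 (eqnP le_nk) expr0 subrr mul0r.
rewrite !gaussE ?(ltnW lt_kn) // -(subnSK lt_kn) !qpoch_baseS !mulrA.
apply/eqP; rewrite eqr_div ?mulf_neq0 ?qpoch_base_neq0 ?subr1X_neq0 //.
by apply/eqP; ring.
Qed.

Lemma gaussS n k : gauss b n.+1 k.+1 = gauss b n k + b ^+ k.+1 * gauss b n k.+1.
Proof.
have bk_neq0 : 1 - b ^+ k.+1 != 0 by rewrite subr1X_neq0.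
apply: (mulfI bk_neq0).
rewrite mul_gauss_diag mulrDr mulrCA mul_gauss_left.
have [le_kn | lt_nk] := leqP k n; last by rewrite gauss_small // !mulr0 addr0.
have -> : b ^+ n.+1 = b ^+ k.+1 * b ^+ (n - k) by rewrite -exprD addSn subnKC.
ring.
Qed.

Lemma RS0 t : RS t b 0 = 1.
Proof. by rewrite /RS big_ord1 gauss0 mulr1. Qed.

Lemma RS_widen t m N :
  (m < N)%N -> RS t b m = \sum_(0 <= j < N) gauss b m j * t ^+ j.
Proof.
move=> lt_mN; rewrite /RS big_mkord.
rewrite (big_ord_widen N (fun j => gauss b m j * t ^+ j)) // big_mkcond.
apply: eq_bigr => j _; case: ifPn => // /negbTE.
by rewrite ltnNge => /negbFE lt_mj; rewrite gauss_small // mul0r.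
Qed.

Lemma RSS t m : RS t b m.+1 = RS (b * t) b m + t * RS t b m.
Proof.
rewrite (@RS_widen _ m.+1 m.+2) // (@RS_widen (b * t) m m.+2) //.
rewrite (@RS_widen t m m.+1) // big_nat_recl // [in RHS]big_nat_recl //.
rewrite !gauss0 !expr0 mulr_sumr -addrA -big_split /=.
congr (_ + _); apply: eq_bigr => j _.
by rewrite gaussS mulrDl exprMn !exprS; ring.
Qed.

Lemma RS_subt t m : RS t b m - RS (b * t) b m = (1 - b ^+ m) * t * RS t b m.-1.
Proof.
case: m => [|m]; first by rewrite !RS0 expr0 subrr !mul0r.
rewrite (@RS_widen t m.+1 m.+2) // (@RS_widen (b * t) m.+1 m.+2) //.
rewrite (@RS_widen t m m.+1) // -sumrB big_nat_recl // !expr0 subrr add0r.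
rewrite mulr_sumr; apply: eq_bigr => j _.
transitivity ((1 - b ^+ j.+1) * gauss b m.+1 j.+1 * t ^+ j.+1).
  by rewrite exprMn; ring.
by rewrite mul_gauss_diag [t ^+ j.+1]exprS; ring.
Qed.

End GaussBinomial.

Section Bisection.

Variable q : K.
Hypothesis q_not_root1 : forall m, (0 < m)%N -> q ^+ m != 1.

Local Notation b := (q ^+ 2).

Lemma sq_not_root1 m : (0 < m)%N -> b ^+ m != 1.
Proof. by move=> m_gt0; rewrite -exprM q_not_root1 // muln_gt0. Qed.

Lemma sq_exprX k : b ^+ k = q ^+ k * q ^+ k.
Proof. by rewrite exprAC expr2. Qed.

Definition bisect_coef k := qpoch (- q) q k * q ^+ 'C(k, 2).

(* The even sum is [bisect n s (s ^+ 2)], the odd one [bisect n (q * s) (s ^+ 2)]. *)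
Definition bisect n u t :=
  \sum_(0 <= k < n.+1) bisect_coef k * u ^+ k * gauss b n k * RS t b (n - k).

Lemma bisect_coefS k : bisect_coef k.+1 = bisect_coef k * q ^+ k * (1 + q ^+ k.+1).
Proof. by rewrite /bisect_coef qpochS binS bin1 exprD mulrN opprK -exprSr; ring. Qed.

Lemma bisect_subt n u t :
  bisect n u t - bisect n u (b * t) = (1 - b ^+ n) * t * bisect n.-1 u t.
Proof.
case: n => [|n].
  by rewrite expr0 subrr !mul0r /bisect !big_nat1 !(RS0 sq_not_root1) subrr.
rewrite /bisect -sumrB big_nat_recr //= subnn -mulrBr (RS_subt sq_not_root1).
rewrite expr0 subrr !mul0r mulr0 addr0 mulr_sumr; apply: eq_bigr => k _.
rewrite -mulrBr (RS_subt sq_not_root1) -subnS subSS.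
transitivity (bisect_coef k * u ^+ k * t * RS t b (n - k)
              * ((1 - b ^+ (n.+1 - k)) * gauss b n.+1 k)); first by ring.
by rewrite (mul_gauss_down sq_not_root1); ring.
Qed.

Lemma bisect_subu n u t :
  bisect n u t - bisect n (q * u) t = (1 - b ^+ n) * u * bisect n.-1 (q * u) t.
Proof.
case: n => [|n]; first by rewrite expr0 subrr !mul0r /bisect !big_nat1 !expr0 subrr.
rewrite /bisect -sumrB big_nat_recl // !expr0 subrr add0r mulr_sumr.
apply: eq_bigr => k _; rewrite subSS.
transitivity (bisect_coef k * u * (q * u) ^+ k * RS t b (n - k)
              * ((1 - b ^+ k.+1) * gauss b n.+1 k.+1)).
  by rewrite bisect_coefS sq_exprX !exprMn [u ^+ k.+1]exprS [q ^+ k.+1]exprS; ring.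
by rewrite (mul_gauss_diag sq_not_root1); ring.
Qed.

Lemma bisect_RSS n u t :
  \sum_(0 <= k < n.+1) bisect_coef k * u ^+ k * gauss b n k * RS t b (n - k).+1
  = bisect n u (b * t) + t * bisect n u t.
Proof.
rewrite /bisect mulr_sumr -big_split; apply: eq_bigr => k _.
by rewrite /= (RSS sq_not_root1); ring.
Qed.

Lemma bisectS n u t :
  bisect n.+1 u t = bisect n (b * u) (b * t) + (t + q * u) * bisect n (b * u) t
                    + u * bisect n (q * u) t.
Proof.
rewrite {1}/bisect big_nat_recl //.
under eq_bigr => k _ do rewrite subSS (gaussS sq_not_root1) mulrDr mulrDl.
rewrite [X in _ + X = _]big_split /= addrCA [in RHS]mulrDl [in RHS]addrA.
rewrite -bisect_RSS -[in RHS]addrA [in RHS]addrC.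
congr (_ + _).
  rewrite /bisect !mulr_sumr -big_split; apply: eq_bigr => k _.
  by rewrite /= bisect_coefS !exprMn [u ^+ k.+1]exprS [q ^+ k.+1]exprS; ring.
transitivity (\sum_(0 <= k < n.+2)
                bisect_coef k * (b * u) ^+ k * gauss b n k * RS t b (n.+1 - k)).
  rewrite [RHS]big_nat_recl // !(gauss0 sq_not_root1) !expr0.
  by congr (_ + _); apply: eq_bigr => k _; rewrite subSS [(b * u) ^+ _]exprMn; ring.
rewrite big_nat_recr //= gauss_small // mulr0 mul0r addr0.
by apply: eq_big_nat => k /andP[_ lt_kn1]; rewrite subSn.
Qed.

Lemma RS_odd_from_even n :
  (forall s, RS s q (2 * n) = bisect n s (s ^+ 2)) ->
  forall s, RS s q (2 * n).+1 = (1 + s) * bisect n (q * s) (s ^+ 2).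
Proof.
move=> RS_even s; have diff_t := bisect_subt n (q * s) (s ^+ 2).
have diff_u := bisect_subu n s (s ^+ 2).
rewrite (RSS q_not_root1) !RS_even exprMn.
rewrite -(subKr (bisect n (q * s) (s ^+ 2)) (bisect n (q * s) (b * s ^+ 2))) diff_t.
by rewrite -[bisect n s _](subrK (bisect n (q * s) (s ^+ 2))) diff_u; ring.
Qed.

Lemma RS_even_from_odd n :
  (forall s, RS s q (2 * n).+1 = (1 + s) * bisect n (q * s) (s ^+ 2)) ->
  forall s, RS s q (2 * n.+1) = bisect n.+1 s (s ^+ 2).
Proof.
move=> RS_odd s; have diff_t := bisect_subt n (b * s) (s ^+ 2).
have := bisect_subu n (q * s) (s ^+ 2); rewrite mulrA -expr2 => diff_u.
rewrite mulnS add2n (RSS q_not_root1) !RS_odd bisectS exprMn mulrA -expr2.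
rewrite -(subKr (bisect n (b * s) (s ^+ 2)) (bisect n (b * s) (b * s ^+ 2))) diff_t.
by rewrite -[bisect n (q * s) _](subrK (bisect n (b * s) (s ^+ 2))) diff_u; ring.
Qed.

Lemma RS_even n s : RS s q (2 * n) = bisect n s (s ^+ 2).
Proof.
elim: n s => [|n IHn] s; last exact: (RS_even_from_odd (RS_odd_from_even IHn) s).
rewrite muln0 (RS0 q_not_root1) /bisect big_nat1 (gauss0 sq_not_root1) (RS0 sq_not_root1).
by rewrite /bisect_coef qpoch0 bin0n !expr0 !mulr1.
Qed.

Lemma RS_odd n s : RS s q (2 * n).+1 = (1 + s) * bisect n (q * s) (s ^+ 2).
Proof. exact: (RS_odd_from_even (RS_even n) s). Qed.

End Bisection.

Lemma qK_not_root1 m : (0 < m)%N -> qK ^+ m != 1.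
Proof.
move=> m_gt0; rewrite /qK -tofracXn -tofrac1 tofrac_eq.
apply: contraTneq m_gt0 => Xm_eq1.
by have := size_polyXn rat m; rewrite Xm_eq1 size_poly1 => -[<-].
Qed.

Theorem corollary1p1 (n : nat) (s : K) :
  RS s qK (2 * n) =
    \sum_(k < n.+1) qpoch (- qK) qK k * qK ^+ 'C(k, 2) * s ^+ k
                    * gauss (qK ^+ 2) n k * RS (s ^+ 2) (qK ^+ 2) (n - k)
  /\
  RS s qK (2 * n).+1 =
    (1 + s) * \sum_(k < n.+1) qpoch (- qK) qK k * qK ^+ 'C(k.+1, 2) * s ^+ k
                    * gauss (qK ^+ 2) n k * RS (s ^+ 2) (qK ^+ 2) (n - k).
Proof.
split; first by rewrite (RS_even qK_not_root1) /bisect big_mkord.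
rewrite (RS_odd qK_not_root1) /bisect big_mkord; congr (_ * _); apply: eq_bigr => k _.
by rewrite /bisect_coef binS bin1 exprD exprMn; ring.
Qed.
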